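(* For every $T>0$, $$\lim_{\lambda\to\infty}\liminf_{m\to\infty}\mathbb{P}^{(m)}_\sigma\Big(\sup_{s\le T}|x(s)|_{\mathbb{A}_{\mathbb{Q}}}<\lambda\Big)=1.$$
   Context: Fix a real exponent $b>0$ and a sequence $\sigma=(\sigma_p)_{p\in\mathcal P}$ of nonnegative reals indexed by the set $\mathcal P$ of primes with $\sum_p\sigma_p<\infty$. For a prime $p$, $\mathbb{Q}_p$ denotes the $p$-adic numbers with absolute value $|\cdot|_p$ and $\mathbb{Z}_p$ its closed unit ball. Let $G_p\subset\mathbb{Q}_p$ be the set of $p$-adic numbers of the form $\sum_{k<0}a_kp^k$ with $a_k\in\{0,\dots,p-1\}$, only finitely many nonzero; $G_p$ is a set of representatives of $\mathbb{Q}_p/\mathbb{Z}_p$ and is given the group structure of $\mathbb{Q}_p/\mathbb{Z}_p$. Let $X^{(p)}$ be a $G_p$-valued random variable with $\Pr(|X^{(p)}|_p=p^k)=(p^b-1)p^{-kb}$ for every integer $k\ge1$, and, conditionally on $|X^{(p)}|_p=p^k$, uniformly distributed on the finite set $\{x\in G_p:|x|_p=p^k\}$. Let $X^{(p)}_1,X^{(p)}_2,\dots$ be i.i.d. copies of $X^{(p)}$ and $S^{(p)}_n=X^{(p)}_1+\dots+X^{(p)}_n$ (sum in the group $G_p$), $S^{(p)}_0=0$. Put $D_p=\frac{p^b(p-1)}{p^{b+1}-1}\sigma_p$. For an integer $m\ge0$, let $\mathbb{P}^{(m)}_p$ be the law on $D(\mathbb{Q}_p)$ (càdlàg paths $[0,\infty)\to\mathbb{Q}_p$)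 of $t\mapsto p^mS^{(p)}_{\lfloor D_pp^{mb}t\rfloor}$, and $\mathbb{P}^{(m)}_\sigma=\prod_{p}\mathbb{P}^{(m)}_p$ the product measure on $\prod_pD(\mathbb{Q}_p)$ (independent components). For $y=(y_p)\in\prod_p\mathbb{Q}_p$ write $|y|_{\mathbb{A}_{\mathbb{Q}}}=\sup_p|y_p|_p/p$ (the adelic absolute value on $\mathbb{A}_{\mathbb{Q}}=\{y: y_p\in\mathbb{Z}_p\text{ for all but finitely many }p\}$). *)

From HB Require Import structures.
From mathcomp Require Import all_boot all_order all_algebra.
From mathcomp Require Import all_classical all_reals all_analysis.
Set Implicit Arguments. Unset Strict Implicit. Unset Printing Implicit Defensive.
Import Order.TTheory GRing.Theory Num.Theory.
Local Open Scope ring_scope.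

Definition padic_abs {R : realType} (p : nat) (q : rat) : R :=
  if q == 0 then 0
  else (p%:R : R) ^ ((logn p (`|denq q|%N))%:Z - (logn p (`|numq q|%N))%:Z).

(* G_p, the set of p-adic numbers sum_{k<0} a_k p^k with finitely many nonzero
   digits: exactly the rationals a / p^n with 0 <= a < p^n, i.e. rationals in
   [0,1) whose denominator is a power of p. *)
Definition in_Gp (p : nat) (q : rat) : Prop :=
  0 <= q /\ q < 1 /\ exists n : nat, denq q = (p ^ n)%:Z.

(* Addition in G_p (group structure of Q_p/Z_p transported to the
   representatives G_p): x + y reduced mod Z_p. For x, y in G_p, x+y is in
   [0,2). *)
Definition Gp_add (x y : rat) : rat := if 1 <= x + y then x + y - 1 else x + y.

(* Random walk S^{(p)}_n = X^{(p)}_1 + ... + X^{(p)}_n in G_p, where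
   X^{(p)}_{k+1} is represented by X p k. *)
Fixpoint Swalk {Omega : Type} (X : nat -> nat -> Omega -> rat) (p n : nat)
  (w : Omega) : rat :=
  match n with
  | 0 => 0
  | n'.+1 => Gp_add (Swalk X p n' w) (X p n' w)
  end.

Definition Dp {R : realType} (b : R) (sigma : nat -> R) (p : nat) : R :=
  (p%:R `^ b) * (p%:R - 1) / (p%:R `^ (b + 1) - 1) * sigma p.

Definition xpath {R : realType} {Omega : Type} (X : nat -> nat -> Omega -> rat)
  (b : R) (sigma : nat -> R) (m p : nat) (t : R) (w : Omega) : rat :=
  (p ^ m)%:R * Swalk X p (Num.truncn (Dp b sigma p * (p%:R `^ (m%:R * b)) * t)) w.

(* The event { sup_{s <= T} |x(s)|_{A_Q} < lambda } for the m-th rescaling,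
   where |y|_{A_Q} = sup_p |y_p|_p / p. *)
Definition sup_event {R : realType} {Omega : Type}
  (X : nat -> nat -> Omega -> rat) (b : R) (sigma : nat -> R)
  (m : nat) (T lambda : R) : set Omega :=
  [set w | (ereal_sup [set r : \bar R | exists p : nat, exists s : R,
        [/\ prime p, (0 <= s)%R, (s <= T)%R &
            r = (padic_abs p (xpath X b sigma m p s w) / p%:R)%:E]]
      < lambda%:E)%E].

From HB Require Import structures.
From mathcomp Require Import all_boot all_order all_algebra.
From mathcomp Require Import all_classical all_reals all_analysis.
From mathcomp Require Import ring lra zify.
Import Order.TTheory GRing.Theory Num.Theory.
Import numFieldNormedType.Exports.
Local Open Scope ring_scope.
Local Open Scope classical_set_scope.

(* If every step X of the p-th walk satisfies |X|_p <= c p^(m+1), all steps lie in p^-E Z for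
   the largest p^E <= c p^(m+1); this subgroup is stable under the addition of G_p, so all partial
   sums lie in it too, and then |p^m S|_p / p <= c.  Hence sup_(s <= T) |x(s)|_A can reach
   lambda > c only if one of the first D_p p^(mb) T steps of some walk is larger.  By the tail
   P(|X^(p)|_p > r) <= p^b r^-b, each such step has probability at most c^-b p^-(mb), and the
   union bound over p and the steps gives P(sup >= lambda) <= T (sum_p sigma_p) c^-b, uniformly
   in m.  Taking c = lambda / 2 and letting lambda -> oo proves the claim. *)

Lemma Gp_add_Qint_mul (n : nat) (x y : rat) :
  x * n%:R \is a Num.int -> y * n%:R \is a Num.int ->
  Gp_add x y * n%:R \is a Num.int.
Proof.
move=> xn yn; have xyn : (x + y) * n%:R \is a Num.int by rewrite mulrDl rpredD.
by rewrite /Gp_add; case: ifP => // _; rewrite mulrBl mul1r rpredB // rpred_nat.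
Qed.

Lemma Swalk_Qint_mul (Omega : Type) (X : nat -> nat -> Omega -> rat) p N n w :
  (forall k, (k < N)%N -> X p k w * n%:R \is a Num.int) ->
  Swalk X p N w * n%:R \is a Num.int.
Proof.
elim: N => [|N IH] XN /=; first by rewrite mul0r rpred0.
by apply: Gp_add_Qint_mul; [apply: IH => k /ltnW /XN | apply: XN].
Qed.

Lemma Qint_mul_natE (x : rat) (n : nat) :
  (x * n%:R \is a Num.int) = (`|denq x| %| n)%N.
Proof.
apply/idP/idP => [/numqK xn | /dvdnP[k ->]]; last first.
  rewrite natrM mulrCA -[(`|denq x|%N)%:R]/((`|denq x|%:Z)%:~R : rat) absz_denq.
  by rewrite -numqE rpredM ?rpred_int ?rpred_nat.
set z := numq (x * n%:R) in xn.
have numq_eq : numq x * n%:Z = z * denq x.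
  by apply: (@intr_inj rat); rewrite !rmorphM /= numqE xn mulrAC.
have coprime_den_num : coprimez (denq x) (numq x).
  by rewrite /coprimez /gcdz gcdnC; apply: coprime_num_den.
have : (denq x %| n%:Z)%Z.
  by rewrite -(Gauss_dvdzr _ coprime_den_num) numq_eq dvdz_mull.
by rewrite dvdzE.
Qed.

Lemma padic_abs_le_logn_denq {R : realType} (p : nat) (x : rat) : (1 < p)%N ->
  (padic_abs p x : R) <= (p%:R) ^+ logn p `|denq x|.
Proof.
move=> p_gt1; rewrite /padic_abs; case: ifP => _; first exact: exprn_ge0.
have p_ge1 : (1 : R) <= p%:R by rewrite ler1n (ltnW p_gt1).
rewrite expfzDr ?pnatr_eq0 -?lt0n ?(ltnW p_gt1) // -!exprnP.
rewrite -[leRHS]mulr1 ler_wpM2l ?exprn_ge0 ?(le_trans ler01) //.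
by rewrite -exprnN invf_le1 ?exprn_ege1 ?exprn_gt0 ?(lt_le_trans ltr01 p_ge1).
Qed.

Lemma padic_abs_le_pexp {R : realType} (p e : nat) (x : rat) : prime p ->
  x * (p ^ e)%:R \is a Num.int -> (padic_abs p x : R) <= (p%:R) ^+ e.
Proof.
move=> p_prime; rewrite Qint_mul_natE => den_dvd.
apply: (le_trans (@padic_abs_le_logn_denq R p x (prime_gt1 p_prime))).
rewrite -!natrX ler_nat leq_exp2l ?prime_gt1 //.
by rewrite -[e](pfactorK _ p_prime) dvdn_leq_log ?expn_gt0 ?prime_gt0.
Qed.

Lemma padic_abs_pexp_denq {R : realType} (p n : nat) (x : rat) :
  prime p -> (0 < n)%N -> denq x = (p ^ n)%:Z -> (padic_abs p x : R) = p%:R ^+ n.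
Proof.
move=> p_prime n_gt0 den_x.
have x_neq0 : x != 0.
  apply/negP => /eqP x0; move: den_x; rewrite x0 => -[] /esym /eqP.
  by rewrite -[1%N](expn0 p) eqn_exp2l ?prime_gt1 // gtn_eqF.
have num_coprime : coprime p `|numq x|.
  have := coprime_num_den x; rewrite den_x /= coprime_sym.
  by apply: coprime_dvdl; exact: dvdn_exp n_gt0 (dvdnn p).
rewrite /padic_abs (negbTE x_neq0) den_x /= pfactorK // logn_coprime // subr0.
by rewrite -exprnP.
Qed.

Lemma Qint_mul_pexp_trunc_log {R : realType} (p n : nat) (x : rat) (r : R) :
  prime p -> denq x = (p ^ n)%:Z -> padic_abs p x <= r ->
  x * (p ^ trunc_log p (Num.truncn r))%:R \is a Num.int.
Proof.
move=> p_prime den_x abs_le; rewrite Qint_mul_natE den_x /=.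
have [->|n_gt0] := posnP n; first by rewrite dvd1n.
rewrite dvdn_exp2l ?prime_gt1 //; apply: trunc_log_max; first exact: prime_gt1.
rewrite (padic_abs_pexp_denq p n) // in abs_le.
by rewrite truncn_ge_nat ?natrX // (le_trans _ abs_le) ?exprn_ge0.
Qed.

Lemma padic_abs_mul_pexp_le {R : realType} (p m e : nat) (y : rat) : prime p ->
  y * (p ^ e)%:R \is a Num.int ->
  (padic_abs p ((p ^ m)%:R * y) : R) <= p%:R ^+ (e - m).
Proof.
move=> p_prime y_int; apply: padic_abs_le_pexp => //.
have pexp_eq : (p ^ m * p ^ (e - m) = p ^ e * p ^ (m - e))%N.
  by rewrite -!expnD; congr (_ ^ _)%N; lia.
by rewrite mulrAC -natrM pexp_eq natrM mulrAC [_ * y]mulrC rpredM ?rpred_nat.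
Qed.

Lemma pexp_trunc_log_sub_le {R : realType} (p m : nat) (c : R) :
  (1 < p)%N -> 1 <= c ->
  p%:R ^+ (trunc_log p (Num.truncn (c * (p ^ m.+1)%:R)) - m) <= c * p%:R.
Proof.
move=> p_gt1 c_ge1; set e := trunc_log _ _.
have p_ge1 : (1 : R) <= p%:R by rewrite ler1n (ltnW p_gt1).
have [e_le_m|m_lt_e] := leqP e m.
  have -> : (e - m = 0)%N by apply/eqP; rewrite subn_eq0.
  by rewrite expr0 mulr_ege1.
have c_pexp_ge1 : 1 <= c * (p ^ m.+1)%:R.
  by rewrite natrX mulr_ege1 // exprn_ege1.
have pexp_e_le : (p ^ e)%:R <= c * (p ^ m.+1)%:R.
  rewrite -truncn_ge_nat; last exact: le_trans ler01 c_pexp_ge1.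
  by apply: trunc_logP; rewrite ?truncn_gt0.
have pexp_m_gt0 : (0 : R) < (p ^ m)%:R by rewrite ltr0n expn_gt0 (ltnW p_gt1).
rewrite -(ler_pM2r pexp_m_gt0) -natrX -natrM -expnD subnK; last exact: ltnW.
by rewrite -mulrA -natrM -expnS.
Qed.

Lemma padic_abs_rescaled_walk_le {R : realType} (Omega : Type)
    (X : nat -> nat -> Omega -> rat) (p m n : nat) (c : R) (w : Omega) :
  prime p -> 1 <= c ->
  (forall k, (k < n)%N -> in_Gp p (X p k w)) ->
  (forall k, (k < n)%N -> padic_abs p (X p k w) <= c * (p ^ m.+1)%:R) ->
  padic_abs p ((p ^ m)%:R * Swalk X p n w) / p%:R <= c.
Proof.
move=> p_prime c_ge1 X_Gp X_le.
set e := trunc_log p (Num.truncn (c * (p ^ m.+1)%:R)).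
have walk_int : Swalk X p n w * (p ^ e)%:R \is a Num.int.
  apply: Swalk_Qint_mul => k k_lt_n; have [_ [_ [j den_X]]] := X_Gp k k_lt_n.
  exact: Qint_mul_pexp_trunc_log den_X (X_le k k_lt_n).
rewrite ler_pdivrMr ?ltr0n ?prime_gt0 //.
apply: le_trans (@padic_abs_mul_pexp_le R p m e _ p_prime walk_int) _.
exact: pexp_trunc_log_sub_le (prime_gt1 p_prime) c_ge1.
Qed.

Definition rat_measurable {d} {Omega : measurableType d} (f : Omega -> rat) :=
  forall q : rat, measurable [set w | f w = q].

Section RatMeasurable.
Context {d} {Omega : measurableType d}.
Implicit Types f g : Omega -> rat.

Lemma rat_measurable_preimage f (Q : rat -> Prop) :
  rat_measurable f -> measurable [set w | Q (f w)].
Proof.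
move=> f_meas; have -> : [set w | Q (f w)] =
    \bigcup_q (if pselect (Q q) then [set w | f w = q] else set0).
  apply/seteqP; split => [w /= Qfw|w [q _]].
    by exists (f w) => //; case: pselect.
  by case: pselect => // Qq /= ->.
apply: bigcupT_measurable_rat => q.
by case: pselect => Qq; [exact: f_meas | exact: measurable0].
Qed.

Lemma rat_measurable_cst (r : rat) : rat_measurable (fun _ : Omega => r).
Proof.
move=> q; have [->|r_neq_q] := eqVneq r q.
  by rewrite (_ : [set _ | _] = setT) //; apply/seteqP; split.
rewrite (_ : [set _ | _] = set0) //.
by apply/seteqP; split => // w /eqP; rewrite (negbTE r_neq_q).
Qed.

Lemma rat_measurable_op (op : rat -> rat -> rat) f g :
  rat_measurable f -> rat_measurable g -> rat_measurable (fun w => op (f w) (g w)).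
Proof.
move=> f_meas g_meas q; have -> : [set w | op (f w) (g w) = q] =
    \bigcup_r ([set w | f w = r] `&` [set w | op r (g w) = q]).
  apply/seteqP; split => [w /= op_eq|w [r _ [/= <- //]]].
  by exists (f w).
apply: bigcupT_measurable_rat => r; apply: measurableI => //.
exact: (rat_measurable_preimage _ (fun y => op r y = q) g_meas).
Qed.

Lemma rat_measurable_Swalk (X : nat -> nat -> Omega -> rat) (p n : nat) :
  (forall k, rat_measurable (X p k)) -> rat_measurable (Swalk X p n).
Proof.
move=> X_meas; elim: n => [|n IH] /=; first exact: rat_measurable_cst.
exact: rat_measurable_op.
Qed.

End RatMeasurable.

Lemma ereal_sup_lt_EFin {R : realType} (S : set \bar R) (l : R) :
  (ereal_sup S < l%:E)%E <->
  exists n : nat, forall x, S x -> (x <= (l - n.+1%:R^-1)%:E)%E.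
Proof.
split=> [|[n S_le]]; last first.
  apply: le_lt_trans (ge_ereal_sup S_le) _.
  by rewrite lte_fin gtrBl invr_gt0 ltr0n.
case sup_S : (ereal_sup S) => [r| |] // r_lt_l.
  have [n rn_lt_l] := ltr_add_invr (r_lt_l : r < l).
  exists n => x Sx; apply: le_trans (ereal_sup_ubound Sx) _.
  by rewrite sup_S lee_fin lerBrDr ltW.
exists 0%N => x Sx; have := ereal_sup_ubound Sx.
by rewrite sup_S leeNy_eq => /eqP ->; exact: leNye.
Qed.

Definition nsteps {R : realType} (b : R) (sigma : nat -> R) (m p : nat) (t : R) :=
  Num.truncn (Dp b sigma p * p%:R `^ (m%:R * b) * t).

Lemma measurable_sup_event {R : realType} (b : R) (sigma : nat -> R)
    {d} {Omega : measurableType d} (X : nat -> nat -> Omega -> rat)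
    (m : nat) (T lambda : R) :
  (forall p k, prime p -> rat_measurable (X p k)) ->
  measurable (sup_event X b sigma m T lambda).
Proof.
move=> X_meas.
(* The path at time s depends on s only through nsteps, whence countably many conditions. *)
have -> : sup_event X b sigma m T lambda =
    \bigcup_n \bigcap_(p in [set p | prime p])
      \bigcap_(k in [set k | exists2 s, 0 <= s <= T & k = nsteps b sigma m p s])
      [set w | padic_abs p ((p ^ m)%:R * Swalk X p k w) / p%:R <= lambda - n.+1%:R^-1].
  apply/seteqP; split => w.
    move=> /ereal_sup_lt_EFin[n sup_le]; exists n => // p p_prime _ [s /andP[s_ge0 s_le_T] ->].
    by rewrite /= -lee_fin; apply: sup_le; exists p, s.
  move=> [n _ path_le]; apply/ereal_sup_lt_EFin; exists n.
  move=> _ [p [s [p_prime s_ge0 s_le_T ->]]]; rewrite lee_fin.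
  by apply: (path_le p p_prime); exists s; rewrite ?s_ge0.
apply: bigcupT_measurable => n; apply: bigcap_measurableType => p p_prime.
apply: bigcap_measurableType => k _.
exact: (rat_measurable_preimage _
  (fun y => padic_abs p ((p ^ m)%:R * y) / p%:R <= lambda - n.+1%:R^-1)
  (rat_measurable_Swalk X p k (fun k => X_meas p k p_prime))).
Qed.

Lemma powR_exprn {R : realType} (x a : R) (n : nat) :
  0 <= x -> (x ^+ n) `^ a = (x `^ a) ^+ n.
Proof.
move=> x_ge0; rewrite -powR_mulrn // -powRrM mulrC powRrM powR_mulrn //.
exact: powR_ge0.
Qed.

Section PadicAbsTail.
Context {R : realType} (b : R) {d} {Omega : measurableType d} (P : probability Omega R).
Variables (p : nat) (Y : Omega -> rat).
Hypotheses (p_prime : prime p) (Y_meas : rat_measurable Y).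
Hypothesis Y_levels : forall j : nat, (0 < j)%N ->
  P [set w | padic_abs p (Y w) = (p%:R : R) ^+ j] =
  (((p%:R : R) `^ b - 1) * (p%:R : R) `^ (- (j%:R * b)))%:E.

Let low_levels J :=
  [set w | exists2 j, (0 < j <= J)%N & padic_abs p (Y w) = (p%:R : R) ^+ j].

Let measurable_low_levels J : measurable (low_levels J).
Proof.
exact: (rat_measurable_preimage _
  (fun y => exists2 j, (0 < j <= J)%N & padic_abs p y = (p%:R : R) ^+ j) Y_meas).
Qed.

Lemma prob_padic_abs_levels (J : nat) :
  P (low_levels J) = (1 - ((p%:R : R) `^ b) ^- J)%:E.
Proof.
have v_gt0 : 0 < (p%:R : R) `^ b by rewrite powR_gt0 // ltr0n prime_gt0.
elim: J => [|J IH].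
  rewrite (_ : low_levels 0 = set0) ?measure0 ?expr0 ?invr1 ?subrr //.
  by apply/seteqP; split => // w [j /andP[j_gt0 /(leq_trans j_gt0)]].
have -> : low_levels J.+1 =
    low_levels J `|` [set w | padic_abs p (Y w) = (p%:R : R) ^+ J.+1].
  apply/seteqP; split => w.
    move=> [j /andP[j_gt0]]; rewrite leq_eqVlt => /orP[/eqP -> |j_le_J] Yw_eq.
      by right.
    by left; exists j; rewrite ?j_gt0.
  case=> [[j /andP[j_gt0 j_le_J] Yw_eq]|Yw_eq]; last by exists J.+1; rewrite ?leqnn.
  by exists j => //; rewrite j_gt0 leqW.
have levels_sum : (1 - ((p%:R : R) `^ b) ^- J.+1)%:E =
    ((1 - ((p%:R : R) `^ b) ^- J) + ((p%:R `^ b - 1) * p%:R `^ (- (J.+1%:R * b))))%:E.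
  rewrite -mulNr (mulrC (- _)) powRrM powR_invn ?powR_ge0 //.
  have telescope (v : R) : v != 0 -> 1 - v ^- J.+1 = 1 - v ^- J + (v - 1) / v ^+ J.+1.
    by move=> v_neq0; rewrite exprS invfM; field; rewrite v_neq0 expf_neq0.
  by rewrite telescope // gt_eqF.
rewrite levels_sum EFinD -IH -Y_levels // measureU //.
  exact: (rat_measurable_preimage _ (fun y => padic_abs p y = (p%:R : R) ^+ J.+1) Y_meas).
apply/seteqP; split => // w [[j /andP[_ j_le_J] Yw_eq]].
rewrite /= Yw_eq -!natrX => /eqP; rewrite eqr_nat eqn_exp2l ?prime_gt1 // => /eqP j_eq.
by move: j_le_J; rewrite j_eq ltnn.
Qed.

Lemma prob_padic_abs_gt_pexp (J : nat) (r : R) : (p%:R : R) ^+ J <= r ->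
  (P [set w | (r < padic_abs p (Y w))%R] <= (((p%:R : R) `^ b) ^- J)%:E)%E.
Proof.
move=> pexp_le_r; set B := [set w | r < padic_abs p (Y w)].
have B_meas : measurable B.
  exact: (rat_measurable_preimage _ (fun y => r < padic_abs p y) Y_meas).
have B_low_disj : B `&` low_levels J = set0.
  apply/seteqP; split => // w [/= r_lt [j /andP[_ j_le_J] Yw_eq]].
  move: r_lt; rewrite /B /= Yw_eq ltNge => /negP; apply; apply: le_trans pexp_le_r.
  by rewrite -!natrX ler_nat leq_exp2l ?prime_gt1.
have := probability_le1 P (measurableU _ _ B_meas (measurable_low_levels J)).
rewrite measureU // -[(_ + _)%E]/(P B + P (low_levels J))%E prob_padic_abs_levels.
have : (0 <= P B)%E by exact: measure_ge0.
by case: (P B) => [x| |] //; rewrite -EFinD !lee_fin => _; lra.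
Qed.

Lemma prob_padic_abs_gt (r : R) : 0 <= b -> 1 <= r ->
  (P [set w | (r < padic_abs p (Y w))%R] <= ((p%:R : R) `^ b / r `^ b)%:E)%E.
Proof.
move=> b_ge0 r_ge1; have p_gt1 := prime_gt1 p_prime.
have r_ge0 : 0 <= r := le_trans ler01 r_ge1.
have p_gt0 : (0 : R) < p%:R by rewrite ltr0n ltnW.
set J := trunc_log p (Num.truncn r).
have pexp_le_r : (p%:R : R) ^+ J <= r.
  rewrite -natrX -truncn_ge_nat //.
  by apply: trunc_logP; rewrite ?truncn_gt0.
have r_lt_pexp : r < (p%:R : R) ^+ J.+1.
  have /andP[_ r_lt] := truncn_itv r_ge0.
  by apply: lt_le_trans r_lt _; rewrite -natrX ler_nat trunc_log_ltn.
apply: le_trans (prob_padic_abs_gt_pexp J r pexp_le_r) _; rewrite lee_fin.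
have v_gt0 : 0 < (p%:R : R) `^ b by rewrite powR_gt0.
have rb_gt0 : 0 < r `^ b by rewrite powR_gt0 // (lt_le_trans ltr01).
have -> : ((p%:R : R) `^ b) ^- J = p%:R `^ b / (p%:R `^ b) ^+ J.+1.
  by rewrite exprS invfM mulrA mulfV ?gt_eqF // mul1r.
apply: ler_wpM2l; first exact: ltW.
rewrite lef_pV2 ?posrE ?exprn_gt0 // -powR_exprn ?ler0n //.
by apply: ge0_ler_powR; rewrite ?nnegrE ?exprn_ge0 ?ler0n ?(ltW r_lt_pexp).
Qed.

End PadicAbsTail.

Lemma Dp_ge0_le_sigma {R : realType} (b : R) (sigma : nat -> R) (p : nat) :
  prime p -> 0 <= b -> 0 <= sigma p -> 0 <= Dp b sigma p <= sigma p.
Proof.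
move=> p_prime b_ge0 sigma_ge0.
have p_gt1 : (1 : R) < p%:R by rewrite ltr1n prime_gt1.
set q := (p%:R : R) `^ b.
have q_ge1 : 1 <= q by have := ler_powR (ltW p_gt1) b_ge0; rewrite powRr0.
have -> : Dp b sigma p = q * (p%:R - 1) / (q * p%:R - 1) * sigma p.
  by rewrite /Dp powRD ?(@powRr1 _ p%:R) ?ler0n // pnatr_eq0 -lt0n prime_gt0 ?implybT.
have den_gt0 : 0 < q * p%:R - 1 by nra.
have ratio_ge0 : 0 <= q * (p%:R - 1) / (q * p%:R - 1).
  rewrite divr_ge0 ?(ltW den_gt0) // mulr_ge0 ?subr_ge0 ?(ltW p_gt1) //.
  exact: le_trans ler01 q_ge1.
have ratio_le1 : q * (p%:R - 1) / (q * p%:R - 1) <= 1.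
  by rewrite ler_pdivrMr // mul1r; nra.
apply/andP; split; first exact: mulr_ge0.
by rewrite -[leRHS]mul1r ler_wpM2r.
Qed.

Section SupEventBound.
Context {R : realType} (b : R) (sigma : nat -> R).
Context {d} {Omega : measurableType d} (P : probability Omega R).
Variable X : nat -> nat -> Omega -> rat.
Hypotheses (b_ge0 : 0 <= b) (sigma_ge0 : forall p, 0 <= sigma p).
Variables (m : nat) (T c lambda : R).
Hypotheses (T_ge0 : 0 <= T) (c_ge1 : 1 <= c) (c_lt_lambda : c < lambda).

Lemma nsteps_le (p : nat) (s : R) : prime p -> s <= T ->
  (nsteps b sigma m p s <= nsteps b sigma m p T)%N.
Proof.
move=> p_prime s_le_T; apply: le_truncn; rewrite ler_wpM2l //.
have /andP[Dp_ge0 _] := Dp_ge0_le_sigma b sigma p p_prime b_ge0 (sigma_ge0 p).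
by rewrite mulr_ge0 ?powR_ge0.
Qed.

Lemma sup_event_of_small_steps (w : Omega) :
  (forall p k, prime p -> in_Gp p (X p k w)) ->
  (forall p k, prime p -> (k < nsteps b sigma m p T)%N ->
     padic_abs p (X p k w) <= c * (p ^ m.+1)%:R) ->
  sup_event X b sigma m T lambda w.
Proof.
move=> X_Gp small_steps; apply: le_lt_trans (_ : c%:E < lambda%:E)%E; last first.
  by rewrite lte_fin.
apply: ge_ereal_sup => _ [p [s [p_prime _ s_le_T ->]]]; rewrite lee_fin.
apply: padic_abs_rescaled_walk_le => // k k_lt; first exact: X_Gp.
by apply: small_steps => //; exact: leq_trans k_lt (nsteps_le p s p_prime s_le_T).
Qed.

Hypothesis X_meas : forall p k, prime p -> rat_measurable (X p k).
Hypothesis X_levels : forall p k j, prime p -> (0 < j)%N ->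
  P [set w | padic_abs p (X p k w) = (p%:R : R) ^+ j] =
  (((p%:R : R) `^ b - 1) * (p%:R : R) `^ (- (j%:R * b)))%:E.

Let large_step p k := [set w | (c * (p ^ m.+1)%:R < padic_abs p (X p k w))%R].

Lemma prob_large_step_le (p k : nat) : prime p ->
  (P (large_step p k) <=
   ((c `^ b * ((p%:R : R) `^ b) ^+ m)^-1)%:E)%E.
Proof.
move=> p_prime; have p_gt0 : (0 : R) < p%:R by rewrite ltr0n prime_gt0.
have c_gt0 : 0 < c := lt_le_trans ltr01 c_ge1.
have r_ge1 : 1 <= c * (p ^ m.+1)%:R.
  by rewrite mulr_ege1 // natrX exprn_ege1 // ler1n prime_gt0.
apply: le_trans (prob_padic_abs_gt b P p (X p k) p_prime (X_meas p k p_prime)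
  (fun j => X_levels p k j p_prime) _ b_ge0 r_ge1) _.
rewrite lee_fin powRM ?ler0n ?(ltW c_gt0) // natrX powR_exprn ?ler0n // exprS.
have v_gt0 : 0 < (p%:R : R) `^ b by rewrite powR_gt0.
have cb_gt0 : 0 < c `^ b by rewrite powR_gt0.
suff -> : p%:R `^ b / (c `^ b * (p%:R `^ b * p%:R `^ b ^+ m)) =
    (c `^ b * ((p%:R : R) `^ b) ^+ m)^-1 by [].
by field; rewrite !gt_eqF ?exprn_gt0.
Qed.

Lemma prob_large_step_before_le (p : nat) : prime p ->
  (P (\big[setU/set0]_(k < nsteps b sigma m p T) large_step p k) <=
   (T * sigma p / c `^ b)%:E)%E.
Proof.
move=> p_prime; set v := (p%:R : R) `^ b.
have v_gt0 : 0 < v by rewrite powR_gt0 // ltr0n prime_gt0.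
have cb_gt0 : 0 < c `^ b by rewrite powR_gt0 // (lt_le_trans ltr01).
have step_meas k : measurable (large_step p k).
  exact: (rat_measurable_preimage _ (fun y => c * (p ^ m.+1)%:R < padic_abs p y)
    (X_meas p k p_prime)).
apply: le_trans (Boole_inequality P (fun k _ => step_meas k)) _.
apply: le_trans (lee_sum _ (fun (k : 'I_(nsteps b sigma m p T)) _ =>
  prob_large_step_le p k p_prime)) _.
rewrite sumEFin sumr_const card_ord lee_fin -[leLHS]mulr_natl mulrC.
have /andP[Dp_ge0 Dp_le] := Dp_ge0_le_sigma b sigma p p_prime b_ge0 (sigma_ge0 p).
have pexp_mb : (p%:R : R) `^ (m%:R * b) = v ^+ m.
  by rewrite mulrC powRrM powR_mulrn ?powR_ge0.
have nsteps_le : (nsteps b sigma m p T)%:R <= Dp b sigma p * v ^+ m * T.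
  by rewrite -pexp_mb truncn_le mulr_ge0 // mulr_ge0 // powR_ge0.
apply: le_trans (ler_wpM2l _ nsteps_le) _.
  by rewrite invr_ge0 mulr_ge0 ?exprn_ge0 ?ltW.
have -> : (c `^ b * v ^+ m)^-1 * (Dp b sigma p * v ^+ m * T) = T * Dp b sigma p / c `^ b.
  by field; rewrite !gt_eqF ?exprn_gt0.
by rewrite ler_pM2r ?invr_gt0 //; exact: ler_wpM2l.
Qed.

Hypothesis X_Gp : forall p k w, prime p -> in_Gp p (X p k w).

Lemma prob_sup_event_ge (S : R) :
  (\sum_(0 <= p <oo | prime p) (sigma p)%:E = S%:E)%E ->
  ((1 - T * S / c `^ b)%:E <= P (sup_event X b sigma m T lambda))%E.
Proof.
move=> sum_sigma; set E := sup_event X b sigma m T lambda.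
have E_meas : measurable E := measurable_sup_event b sigma X m T lambda X_meas.
pose F p := if prime p then \big[setU/set0]_(k < nsteps b sigma m p T) large_step p k
  else set0.
have F_meas p : measurable (F p).
  rewrite /F; case: ifP => // p_prime; apply: bigsetU_measurable => k _.
  exact: (rat_measurable_preimage _ (fun y => c * (p ^ m.+1)%:R < padic_abs p y)
    (X_meas p k p_prime)).
have notE_sub : ~` E `<=` \bigcup_p F p.
  move=> w notEw; apply: contrapT => no_large_step; apply: notEw.
  apply: sup_event_of_small_steps => [p k /X_Gp //|p k p_prime k_lt].
  rewrite leNgt; apply/negP => large; apply: no_large_step; exists p => //.
  by rewrite /F ifT // -bigcup_mkord; exists k.
have PF_le p : (P (F p) <= if prime p then (T / c `^ b * sigma p)%:E else 0)%E.
  rewrite /F mulrAC; case: ifP => p_prime; last by rewrite measure0.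
  exact: prob_large_step_before_le.
have cb_gt0 : 0 < c `^ b by rewrite powR_gt0 // (lt_le_trans ltr01).
have notE_le : (P (~` E) <= (T / c `^ b * S)%:E)%E.
  apply: le_trans (measure_sigma_subadditive P F_meas (measurableC E_meas) notE_sub) _.
  apply: le_trans (lee_nneseries (fun p _ _ => measure_ge0 P (F p)) (fun p _ => PF_le p)) _.
  rewrite -eseries_mkcond EFinM -sum_sigma; under eq_eseriesr do rewrite EFinM.
  by rewrite nneseriesZl // => p _; rewrite lee_fin.
move: notE_le; rewrite probability_setC //.
have : (0 <= P E)%E := measure_ge0 P E.
case: (P E) => [x| |] // _; last by rewrite leey.
rewrite -EFinB !lee_fin mulrAC; lra.
Qed.

End SupEventBound.

Lemma limn_einf_bounds {R : realType} (u : (\bar R)^nat) (a c : \bar R) :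
  (forall n, a <= u n <= c)%E -> (a <= limn_einf u <= c)%E.
Proof.
move=> u_bounds; rewrite limn_einf_lim; apply/andP; split.
  apply: lime_ge; first exact: is_cvg_einfs.
  apply: nearW => n; apply/ereal_infP => _ [k _ <-].
  by case/andP: (u_bounds k).
apply: lime_le; first exact: is_cvg_einfs.
apply: nearW => n; apply: ge_ereal_inf.
exists (u n); first by exists n => /=.
by case/andP: (u_bounds n).
Qed.

Lemma cvg_sub_div_powR_half {R : realType} (K b : R) : 0 < b ->
  (fun x => 1 - K / (x / 2) `^ b) x @[x --> +oo] --> (1 : R).
Proof.
move=> b_gt0; apply/cvgrPdist_le => e e_gt0.
set a := (`|K| + 1) / e.
have a_gt0 : 0 < a by rewrite divr_gt0 // ltr_pwDr.
exists (2 * a `^ b^-1); split; first by rewrite num_real.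
move=> x x_gt.
have x2_gt0 : 0 < x / 2.
  by rewrite divr_gt0 //; apply: le_lt_trans x_gt; rewrite mulr_ge0 ?powR_ge0.
have a_le : a <= (x / 2) `^ b.
  have : (a `^ b^-1) `^ b <= (x / 2) `^ b.
    apply: ge0_ler_powR; rewrite ?nnegrE ?powR_ge0 ?(ltW b_gt0) ?(ltW x2_gt0) //.
    by rewrite ler_pdivlMr // mulrC ltW.
  by rewrite -powRrM mulVf ?gt_eqF // powRr1 ?(ltW a_gt0).
have xb_gt0 : 0 < (x / 2) `^ b by apply: powR_gt0.
rewrite opprB addrC subrK normrM normfV (gtr0_norm xb_gt0).
rewrite ler_pdivrMr //; apply: le_trans (_ : e * a <= _); last by rewrite ler_pM2l.
by rewrite /a mulrC divfK ?gt_eqF //; lra.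
Qed.

Theorem proposition4 (R : realType) (b : R) (sigma : nat -> R)
  (d : measure_display) (Omega : measurableType d) (P : probability Omega R)
  (X : nat -> nat -> Omega -> rat) :
  0 < b ->
  (forall p : nat, 0 <= sigma p) ->
  (\sum_(0 <= p <oo | prime p) (sigma p)%:E < +oo)%E ->
  (* X p k is the (k+1)-th step X^{(p)}_{k+1}; it takes values in G_p *)
  (forall (p k : nat) (w : Omega), prime p -> in_Gp p (X p k w)) ->
  (forall (p k : nat) (q : rat), prime p -> measurable [set w | X p k w = q]) ->
  (* Pr(|X^{(p)}|_p = p^j) = (p^b - 1) p^{-jb} for every integer j >= 1 *)
  (forall (p k j : nat), prime p -> (0 < j)%N ->
     P [set w | padic_abs p (X p k w) = (p%:R : R) ^+ j] =
     (((p%:R : R) `^ b - 1) * (p%:R : R) `^ (- (j%:R * b)))%:E) ->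
  (* conditionally on |X^{(p)}|_p, X^{(p)} is uniform *)
  (forall (p k : nat) (x y : rat), prime p -> in_Gp p x -> in_Gp p y ->
     (padic_abs p x : R) = padic_abs p y ->
     P [set w | X p k w = x] = P [set w | X p k w = y]) ->
  (* mutual independence of all the X^{(p)}_k, p prime, k >= 1 *)
  (forall (s : seq (nat * nat)) (x : nat * nat -> rat),
     uniq s -> all (fun i => prime i.1) s ->
     P [set w | forall i, i \in s -> X i.1 i.2 w = x i] =
     (\prod_(i <- s) P [set w | X i.1 i.2 w = x i])%E) ->
  forall T : R, 0 < T ->
    (fun lambda : R =>
       limn_einf (fun m : nat => P (sup_event X b sigma m T lambda)))
      x @[x --> +oo] --> 1%E.
Proof.
move=> b_gt0 sigma_ge0 sum_lty X_Gp X_fibers X_levels _ _ T T_gt0.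
have X_meas p k : prime p -> rat_measurable (X p k) by move=> p_prime q; apply: X_fibers.
set S := (\sum_(0 <= p <oo | prime p) (sigma p)%:E)%E in sum_lty.
have S_fin : S = (fine S)%:E.
  by rewrite fineK // ge0_fin_numE // nneseries_ge0 // => p _; rewrite lee_fin.
apply: (@squeeze_cvge _ _ _ R (fun l => (1 - T * fine S / (l / 2) `^ b)%:E) _ (fun=> 1%E)).
- exists 2; split; first by rewrite num_real.
  move=> lambda lambda_gt2; apply: limn_einf_bounds => m; apply/andP; split.
    apply: (prob_sup_event_ge _ _ _ _ (ltW b_gt0) sigma_ge0 _ _ _ _ (ltW T_gt0)) => //.
    + by rewrite ler_pdivlMr //; lra.
    + by rewrite ltr_pdivrMr //; lra.
  exact/probability_le1/measurable_sup_event.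
- by apply: cvg_EFin; [exact: nearW | exact: cvg_sub_div_powR_half].
- exact: cvg_cst.
Qed.
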